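(* Let $C$ be a Greene–Kleitman chain of length $h$ in $Q_n$ and let $C'$ be a child of $C$ obtained by matching the two consecutive $*$s of $C$ at positions $a$ and $b$. Then there are exactly $h-2$ flipping $4$-cycles between $C$ and $C'$; they use pairwise distinct edges of $C$ and pairwise distinct edges of $C'$, and the edges of $C$ they use are all edges of $C$ except the two consecutive edges of $C$ that flip the coordinates $a$ and $b$.
   Context: $Q_n$ is the hypercube on $\{0,1\}^n$. Let $D$ be the set of bitstrings (including the empty string) with equally many $0$s and $1$s such that every prefix has at least as many $0$s as $1$s. A (Greene–Kleitman) chain of length $h$ is encoded as a string of length $n$ over $\{0,1,*\}$ of the form $u_0*u_1*\cdots*u_{h-1}*u_h$ with all $u_j\in D$; it is the path in $Q_n$ whose vertices are obtained by replacing the $*$s by $i$ ones followed by $h-i$ zeros, $i=0,1,\ldots,h$ (consecutive vertices differ in one $*$-position). A chain $C'$ of length $h-2$ is a child of a chain $C$ of length $h$ if $C'$ is obtained from $C$ by replacing two consecutive $*$s (i.e., two $*$s with no $*$ between them) by $0$ and $1$, respectively (''matching two $*$s''). A flipping $4$-cycle between two vertex-disjoint paths $P,P'$ is a $4$-cycle in $Q_n$ that shares exactly one edge with each of the two paths. *)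

From mathcomp Require Import all_boot.
Set Implicit Arguments. Unset Strict Implicit. Unset Printing Implicit Defensive.

(* Symbols over {0,1,*}: Some false = 0, Some true = 1, None = *.
   Bits: false = 0, true = 1. *)

Definition dyck (s : seq bool) : bool :=
  (count id s == count negb s) &&
  all (fun k => count id (take k s) <= count negb (take k s)) (iota 0 (size s).+1).

Definition gk_word (us : seq (seq bool)) : seq (option bool) :=
  match us with
  | [::] => [::]
  | u :: rest => map Some u ++ flatten [seq None :: map Some u' | u' <- rest]
  end.

Definition gk_chain (n h : nat) (w : seq (option bool)) : Prop :=
  size w = n /\
  exists us : seq (seq bool), [/\ size us = h.+1, all dyck us & w = gk_word us].

Definition vtx (n : nat) := {ffun 'I_n -> bool}.

Definition adj n (u v : vtx n) : bool := #|[set j | u j != v j]| == 1.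

Definition nstars (w : seq (option bool)) : nat := count (pred1 None) w.

(* i-th vertex of the chain: the first i stars become 1, the remaining 0 *)
Definition vert n (w : seq (option bool)) (i : nat) : vtx n :=
  [ffun j : 'I_n => match nth None w j with
                    | Some b => b
                    | None => count (pred1 None) (take j w) < i
                    end].

Definition chain_edges n (w : seq (option bool)) : {set {set vtx n}} :=
  [set [set vert n w i; vert n w i.+1] | i : 'I_(nstars w)].

Definition flip_edges n (w : seq (option bool)) (a : 'I_n) : {set {set vtx n}} :=
  [set e in chain_edges n w | [exists u in e, exists v in e, u a != v a]].

Definition child_at (w w' : seq (option bool)) (a b : nat) : Prop :=
  [/\ a < b < size w, nth (Some false) w a = None, nth (Some false) w b = None,
      (forall k, a < k < b -> nth (Some false) w k != None) &
      w' = set_nth None (set_nth None w a (Some false)) b (Some true)].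

Definition is_cycle4 n (E : {set {set vtx n}}) : bool :=
  [exists v0 : vtx n, exists v1 : vtx n, exists v2 : vtx n, exists v3 : vtx n,
    [&& uniq [:: v0; v1; v2; v3], adj v0 v1, adj v1 v2, adj v2 v3, adj v3 v0 &
        E == [set [set v0; v1]; [set v1; v2]; [set v2; v3]; [set v3; v0]]]].

Definition flipping_cycles n (P P' : {set {set vtx n}}) : {set {set {set vtx n}}} :=
  [set E | [&& is_cycle4 E, #|E :&: P| == 1 & #|E :&: P'| == 1]].

From mathcomp Require Import all_boot zify.
Set Implicit Arguments. Unset Strict Implicit. Unset Printing Implicit Defensive.

(* Let k be the number of *s of C before position a, and x_i, y_i the vertices of C and C'.
   Matching the *s at a and b gives y_i = x_i + e_b for i <= k and y_i = x_(i+2) + e_a for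
   i >= k. Hence C and C' are vertex-disjoint, and each edge of C flipping a coordinate
   j other than a, b is opposite, on a square whose two other edges flip a or b, to the
   edge of C' flipping j. Conversely, a flipping 4-cycle meets the two disjoint paths in
   opposite edges flipping the same coordinate d, and d is a * of C', so d differs from a
   and b. Since each path flips each coordinate at most once, a flipping 4-cycle is
   determined by its edge on either path. *)

Definition flip n (u : vtx n) (c : 'I_n) : vtx n :=
  [ffun j => if j == c then ~~ u j else u j].

Notation edge u c := [set u; @flip _ u c].

Definition square n (p : vtx n) (d c : 'I_n) : {set {set vtx n}} :=
  [set edge p d; edge p c; edge (flip p d) c; edge (flip p c) d].

Section Hypercube.
Variable n : nat.
Local Notation V := (vtx n).
Implicit Types (u v p : V) (a c d e f : 'I_n).

Lemma flipE u c j : flip u c j = if j == c then ~~ u j else u j.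
Proof. by rewrite ffunE. Qed.

Lemma flipK c : involutive ((@flip n)^~ c).
Proof. by move=> u; apply/ffunP=> j; rewrite !flipE; case: eqP; rewrite ?negbK. Qed.

Lemma flipC u c d : flip (flip u c) d = flip (flip u d) c.
Proof. by apply/ffunP=> j; rewrite !flipE; case: (j == c); case: (j == d). Qed.

Lemma flip_neq u c : flip u c != u.
Proof. by apply/eqP=> /ffunP/(_ c); rewrite flipE eqxx; case: (u c). Qed.

Lemma flip_dir_inj u : injective (flip u).
Proof.
by move=> c d /ffunP/(_ c); rewrite !flipE eqxx; case: eqP => // _; case: (u c).
Qed.

Lemma flip2_neq u c d : c != d -> flip (flip u d) c != u.
Proof.
by move=> cd; apply/eqP=> /ffunP/(_ c); rewrite !flipE eqxx (negbTE cd); case: (u c).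
Qed.

Lemma flip3_eq_flip u c d e f : c != d ->
  flip (flip (flip u d) c) e = flip u f -> (e = d /\ f = c) \/ (e = c /\ f = d).
Proof.
move=> cd /ffunP E.
have hd : (d == e) = ~~ (d == f).
  by move: (E d); rewrite !flipE eqxx (eq_sym d c) (negbTE cd); do 2!case: (_ == _); case: (u d).
have hc : (c == e) = ~~ (c == f).
  by move: (E c); rewrite !flipE eqxx (negbTE cd); do 2!case: (_ == _); case: (u c).
case: (d =P e) hd hc => [<- _|_ /esym/negbFE/eqP <-].
  by rewrite (negbTE cd) => /esym/negbFE/eqP; left.
by rewrite cd => /eqP; right.
Qed.

Lemma flip2_neq_flip u c d e : flip (flip u d) c != flip u e.
Proof.
have [-> | cd] := eqVneq c d; first by rewrite flipK eq_sym flip_neq.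
apply/eqP=> /ffunP E; have [ed | ed] := eqVneq e d.
  by move: (E c); rewrite !flipE eqxx (negbTE cd) ed (negbTE cd); case: (u c).
by move: (E d); rewrite !flipE eqxx (eq_sym d c) (negbTE cd) (eq_sym d e) (negbTE ed);
  case: (u d).
Qed.

Lemma adj_flip u c : adj u (flip u c).
Proof.
apply/cards1P; exists c; apply/setP=> j; rewrite !inE flipE.
by case: (j =P c) => [->|_]; [case: (u c) | rewrite eqxx].
Qed.

Lemma adj_flipl u c : adj (flip u c) u.
Proof. by rewrite -{2}(flipK c u) adj_flip. Qed.

Lemma adj_exists_flip u v : adj u v -> exists c, v = flip u c.
Proof.
move=> /cards1P [c Ec]; exists c; apply/ffunP=> j; rewrite flipE.
have /setP/(_ j) := Ec; rewrite !inE.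
by case: (j =P c) => [->|_]; [case: (u c); case: (v c) | case: (u j); case: (v j)].
Qed.

Lemma edge_flip u c : edge (flip u c) c = edge u c.
Proof. by rewrite flipK setUC. Qed.

Lemma edge_dir_inj u v c d : edge u c = edge v d -> c = d.
Proof.
move=> E; have : u \in edge v d by rewrite -E set21.
have : flip u c \in edge v d by rewrite -E set22.
rewrite !inE => /orP [] /eqP uc /orP [] /eqP uv; move: uc; rewrite uv => /eqP.
- by rewrite (negbTE (flip_neq _ _)).
- by have [// | /(flip2_neq v) /negbTE ->] := eqVneq c d.
- by move/eqP/flip_dir_inj.
- by rewrite (negbTE (flip_neq _ _)).
Qed.

Lemma edge_flipsE u c a :
  [exists x in edge u c, exists y in edge u c, x a != y a] = (c == a).
Proof.
apply/existsP/eqP => [[x /andP [] /[!inE] xe /existsP [y /andP [] /[!inE] ye]] | <-].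
  case: (a =P c) => [-> // | /eqP/negbTE ac].
  by case/orP: xe => /eqP ->; case/orP: ye => /eqP ->; rewrite ?flipE ?ac ?eqxx.
exists u; rewrite set21 /=; apply/existsP; exists (flip u c).
by rewrite set22 flipE eqxx; case: (u c).
Qed.

Lemma square_swap p d c : square p d c = square p c d.
Proof. by apply/setP => e; rewrite !inE; do !case: (_ == _). Qed.

Lemma square_flipr p d c : square (flip p c) d c = square p d c.
Proof.
rewrite /square; have -> : edge (flip (flip p c) d) c = edge (flip p d) c.
  by rewrite flipC edge_flip.
rewrite edge_flip flipK.
by apply/setP => e; rewrite !inE; do !case: (_ == _).
Qed.

Lemma square_flipl p d c : square (flip p d) d c = square p d c.
Proof. by rewrite square_swap square_flipr square_swap. Qed.

Lemma square_cycleE p d c : square p d c =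
  [set edge p d; edge (flip p d) c; [set flip (flip p d) c; flip p c]; [set flip p c; p]].
Proof.
rewrite /square (setUC [set flip p c] [set p]) (setUC [set flip (flip p d) c]).
by apply/setP => e; rewrite !inE (flipC p d c); do !case: (_ == _).
Qed.

Lemma square_cycle4 p d c : c != d -> is_cycle4 (square p d c).
Proof.
move=> cd; apply/existsP; exists p; apply/existsP; exists (flip p d).
apply/existsP; exists (flip (flip p d) c); apply/existsP; exists (flip p c).
rewrite !adj_flip adj_flipl /=; apply/and3P; split.
- have dc : flip p c != flip p d by apply: contra cd => /eqP/flip_dir_inj ->.
  rewrite !inE !negb_or !(eq_sym p) !(eq_sym (flip p d)) !flip_neq flip2_neq //.
  by rewrite flip2_neq_flip dc eq_sym flip_neq.
- by rewrite (flipC p d c) adj_flipl.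
- by rewrite square_cycleE.
Qed.

Lemma cycle4_square E : is_cycle4 E -> exists p d c, c != d /\ E = square p d c.
Proof.
case/existsP => p /existsP [q /existsP [r /existsP [v /andP [uniqv]]]].
case/and5P => /adj_exists_flip [d qE] /adj_exists_flip [c rE] /adj_exists_flip [e vE].
move=> /adj_exists_flip [f pE] /eqP ->; subst q r v.
have cd : c != d.
  by apply: contraTneq uniqv => cd; rewrite /= cd flipK !inE eqxx orbT.
have vE : flip (flip (flip p d) c) e = flip p f by rewrite {2}pE flipK.
case: (flip3_eq_flip cd vE) => [[_ fc] | [ec _]].
  by exists p, d, c; rewrite cd square_cycleE vE fc.
by move: uniqv; rewrite ec flipK /= !inE eqxx !orbT andbF.
Qed.

Lemma square_opposite_edges p d c (e e' : {set V}) : c != d ->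
    e \in square p d c -> e' \in square p d c -> [disjoint e & e'] ->
  exists p' d' c', [/\ c' != d', square p d c = square p' d' c',
                        e' = edge p' d' & e = edge (flip p' c') d'].
Proof.
move=> cd + + dis; have {}dis x : x \in e -> x \in e' -> False by move/(disjointFr dis) ->.
(* Two edges of a square that are not opposite share a vertex. *)
rewrite !inE -!orbA => /or4P [] /eqP eE /or4P [] /eqP e'E; subst e e';
  try first [ by case: (dis p); rewrite !inE eqxx ?orbT
            | by case: (dis (flip p d)); rewrite !inE eqxx ?orbT
            | by case: (dis (flip p c)); rewrite !inE eqxx ?orbT
            | by case: (dis (flip (flip p d) c)); rewrite !inE ?(flipC p c d) eqxx ?orbT ].
- by exists (flip p c), d, c; rewrite cd square_flipr flipK.
- exists (flip p d), c, d; rewrite eq_sym cd flipK.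
  by rewrite square_flipr square_swap.
- by exists p, c, d; rewrite eq_sym cd square_swap.
- by exists p, d, c.
Qed.

Lemma square_eq p1 d1 c1 p2 d2 c2 :
    edge p1 d1 = edge p2 d2 -> edge (flip p1 c1) d1 = edge (flip p2 c2) d2 ->
  square p1 d1 c1 = square p2 d2 c2.
Proof.
move=> E1 E2; have d12 := edge_dir_inj E1; subst d2.
have flipc_inj p c c' : edge (flip p c) d1 = edge (flip p c') d1 -> c = c'.
  move=> E; have : flip p c \in edge (flip p c') d1 by rewrite -E set21.
  rewrite !inE => /orP [/eqP/flip_dir_inj // | /eqP E'].
  by move: (flip2_neq_flip p d1 c' c); rewrite E' eqxx.
have : p2 \in edge p1 d1 by rewrite E1 set21.
rewrite !inE => /orP [] /eqP p2E; subst p2; first by rewrite (flipc_inj _ _ _ E2).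
by move: E2; rewrite square_flipl (flipC p1 d1) edge_flip => /flipc_inj ->.
Qed.

End Hypercube.

Section FlippingCycles.
Variables (n : nat) (P P' : {set {set vtx n}}).
Hypothesis paths_disjoint : forall e e', e \in P -> e' \in P' -> [disjoint e & e'].
Local Notation F := (flipping_cycles P P').
Implicit Types (p u : vtx n) (c d : 'I_n) (e z : {set vtx n}) (E : {set {set vtx n}}).

Lemma flipping_cycle_square E : E \in F -> exists p d c,
  [/\ c != d, E = square p d c, E :&: P = [set edge (flip p c) d] & E :&: P' = [set edge p d]].
Proof.
rewrite inE => /and3P [cycE /cards1P [e EPe] /cards1P [e' EP'e']].
have /setIP [eE eP] : e \in E :&: P by rewrite EPe set11.
have /setIP [e'E e'P'] : e' \in E :&: P' by rewrite EP'e' set11.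
have [p [d [c [cd Esq]]]] := cycle4_square cycE; rewrite Esq in eE e'E.
have [q [d' [c' [cd' sqE e'q eq']]]] :=
  square_opposite_edges cd eE e'E (paths_disjoint eP e'P').
by exists q, d', c'; rewrite -eq' -e'q -sqE -Esq.
Qed.

Lemma square_flipping_cycle p d c :
    c != d -> edge (flip p c) d \in P -> edge p d \in P' ->
  square p d c \in F /\ square p d c :&: P = [set edge (flip p c) d].
Proof.
move=> cd eP e'P'.
(* Each of the two other edges of the square meets both paths, so it lies on neither. *)
have notP (z : {set vtx n}) u : u \in z -> u \in edge p d -> z \notin P.
  by move=> uz ue'; apply: contraL uz => zP; rewrite (disjointFl (paths_disjoint zP e'P') ue').
have notP' (z : {set vtx n}) u : u \in z -> u \in edge (flip p c) d -> z \notin P'.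
  by move=> uz ue; apply: contraL uz => zP'; rewrite (disjointFr (paths_disjoint eP zP') ue).
have sqP : square p d c :&: P = [set edge (flip p c) d].
  apply/setP => z; rewrite in_setI in_set1; apply/andP/eqP => [[] | ->]; last first.
    by rewrite eP !inE eqxx !orbT.
  rewrite !inE -!orbA => /or4P [] /eqP -> //.
  - by rewrite (negbTE (notP _ p _ _)) // !inE eqxx.
  - by rewrite (negbTE (notP _ p _ _)) // !inE eqxx.
  - by rewrite (negbTE (notP _ (flip p d) _ _)) // !inE eqxx ?orbT.
have sqP' : square p d c :&: P' = [set edge p d].
  apply/setP => z; rewrite in_setI in_set1; apply/andP/eqP => [[] | ->]; last first.
    by rewrite e'P' !inE eqxx.
  rewrite !inE -!orbA => /or4P [] /eqP -> //.
  - by rewrite (negbTE (notP' _ (flip p c) _ _)) // !inE eqxx ?orbT.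
  - by rewrite (negbTE (notP' _ (flip (flip p d) c) _ _)) // !inE ?(flipC p c d) eqxx ?orbT.
  - by rewrite (negbTE (notP' _ (flip p c) _ _)) // !inE eqxx ?orbT.
by rewrite inE square_cycle4 // sqP sqP' !cards1.
Qed.

Hypothesis P'_flips_once :
  forall u v c, edge u c \in P' -> edge v c \in P' -> edge u c = edge v c.

Lemma flipping_cycle_setI_inj : {in F &, injective (fun E => E :&: P)}.
Proof.
move=> E1 E2 /flipping_cycle_square [p1 [d1 [c1 [_ -> -> e1]]]].
move=> /flipping_cycle_square [p2 [d2 [c2 [_ -> -> e2]]]] /set1_inj e12.
have d12 := edge_dir_inj e12; subst d2; apply: square_eq e12; apply: P'_flips_once.
  by have /setIP [] : edge p1 d1 \in square p1 d1 c1 :&: P' by rewrite e1 set11.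
by have /setIP [] : edge p2 d1 \in square p2 d1 c2 :&: P' by rewrite e2 set11.
Qed.

Lemma flipping_cycles_disjointl :
  {in F &, forall E1 E2, E1 != E2 -> [disjoint E1 :&: P & E2 :&: P]}.
Proof.
move=> E1 E2 F1 F2; move: (F1) (F2); rewrite !inE.
move=> /and3P [_ /cards1P [e1 E1e] _] /and3P [_ /cards1P [e2 E2e] _].
rewrite E1e E2e disjoints1 inE; apply: contra => /eqP e12.
by apply/eqP/flipping_cycle_setI_inj; rewrite // E1e E2e e12.
Qed.

End FlippingCycles.

Lemma flipping_cyclesC n (P P' : {set {set vtx n}}) :
  flipping_cycles P P' = flipping_cycles P' P.
Proof. by apply/setP => E; rewrite !inE andbA andbAC -andbA. Qed.

Lemma flipping_cycles_disjointr n (P P' : {set {set vtx n}}) :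
    (forall e e', e \in P -> e' \in P' -> [disjoint e & e']) ->
    (forall u v c, edge u c \in P -> edge v c \in P -> edge u c = edge v c) ->
  {in flipping_cycles P P' &, forall E1 E2, E1 != E2 -> [disjoint E1 :&: P' & E2 :&: P']}.
Proof.
move=> disj once; rewrite flipping_cyclesC; apply: flipping_cycles_disjointl once.
by move=> e' e e'P' eP; rewrite disjoint_sym; apply: disj.
Qed.

Definition star_rank (w : seq (option bool)) j := nstars (take j w).

Lemma count_None_map_Some (u : seq bool) : count (pred1 None) (map Some u) = 0.
Proof. by elim: u. Qed.

Lemma nstars_gk_word us : nstars (gk_word us) = (size us).-1.
Proof.
case: us => [|u us] //=; rewrite /nstars count_cat count_None_map_Some.
by rewrite add0n; elim: us => //= u' us IH; rewrite count_cat count_None_map_Some IH.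
Qed.

Lemma star_of_rank w i : i < nstars w ->
  exists j, [/\ j < size w, nth None w j = None & star_rank w j = i].
Proof.
elim: w i => [|[b|] s IH] i //=.
  by move=> /IH [j [lt_js sj rank_j]]; exists j.+1.
case: i => [_ | i /IH [j [lt_js sj rank_j]]]; first by exists 0.
by exists j.+1; rewrite /star_rank /= -/(star_rank s j) rank_j.
Qed.

Section StarRank.
Variable w : seq (option bool).

Lemma star_rankS j : j < size w ->
  star_rank w j.+1 = star_rank w j + (nth None w j == None).
Proof.
by move=> lt_j; rewrite /star_rank (take_nth None lt_j) -cats1 /nstars count_cat /= addn0.
Qed.

Lemma star_rank_mono : {homo star_rank w : j k / j <= k}.
Proof. by move=> j k /subnKC <-; rewrite /star_rank takeD /nstars count_cat leq_addr. Qed.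

(* [nth None w j = None] also holds past the end of [w], hence the bounds [j < size w]. *)
Lemma star_rank_lt j k : j < size w -> j < k -> nth None w j = None ->
  star_rank w j < star_rank w k.
Proof.
move=> lt_jw lt_jk wj; apply: leq_trans (star_rank_mono lt_jk).
by rewrite star_rankS // wj addn1.
Qed.

Lemma star_rank_lt_nstars j : j < size w -> nth None w j = None -> star_rank w j < nstars w.
Proof. by move=> lt_jw wj; rewrite -[w in nstars w]take_size star_rank_lt. Qed.

Lemma star_rank_inj j k : j < size w -> k < size w -> nth None w j = None ->
  nth None w k = None -> star_rank w j = star_rank w k -> j = k.
Proof.
move=> lt_jw lt_kw wj wk eq_jk; case: (ltngtP j k) => // [lt_jk | lt_kj].
  by move: (star_rank_lt lt_jw lt_jk wj); rewrite eq_jk ltnn.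
by move: (star_rank_lt lt_kw lt_kj wk); rewrite eq_jk ltnn.
Qed.

End StarRank.

Lemma vertE n w i (j : 'I_n) :
  vert n w i j = if nth None w j is Some c then c else star_rank w j < i.
Proof. by rewrite ffunE. Qed.

Section Chain.
Variables (n : nat) (w : seq (option bool)).
Hypothesis size_w : size w = n.
Local Notation x i := (vert n w i).
Local Notation P := (chain_edges n w).

Lemma star_rank_neq (j c : 'I_n) : nth None w j = None -> nth None w c = None ->
  j != c -> star_rank w j != star_rank w c.
Proof.
move=> wj wc; apply: contra => /eqP/(star_rank_inj _ _ wj wc) eq_jc.
by apply/eqP/val_inj/eq_jc; rewrite size_w.
Qed.

Lemma vert_succ i (j : 'I_n) : nth None w j = None -> star_rank w j = i ->
  x i.+1 = flip (x i) j.
Proof.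
move=> wj rank_j; apply/ffunP => m; rewrite flipE !vertE.
have [-> | ne_mj] := eqVneq m j; first by rewrite wj rank_j ltnSn ltnn.
case wm: (nth None w m) => [b|] //.
by rewrite ltnS leq_eqVlt -rank_j (negbTE (star_rank_neq wm wj ne_mj)).
Qed.

Lemma vert_succ_star i : i < nstars w ->
  exists j : 'I_n, [/\ nth None w j = None, star_rank w j = i & x i.+1 = flip (x i) j].
Proof.
move=> /star_of_rank [j [lt_jw wj rank_j]]; have lt_jn : j < n by rewrite -size_w.
by exists (Ordinal lt_jn); rewrite (vert_succ (j := Ordinal lt_jn)).
Qed.

Lemma chain_edge_inv e : e \in P ->
  exists i (j : 'I_n), [/\ i < nstars w, nth None w j = None, star_rank w j = i &
                          e = edge (x i) j].
Proof.
case/imsetP => i _ ->; have [j [wj rank_j ->]] := vert_succ_star (ltn_ord i).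
by exists i, j.
Qed.

Lemma chain_edge_succ i : i < nstars w -> [set x i; x i.+1] \in P.
Proof. by move=> lt_i; apply/imsetP; exists (Ordinal lt_i). Qed.

Lemma chain_edge_vert e u : e \in P -> u \in e -> exists i, u = x i.
Proof. by case/imsetP => i _ -> /set2P [] ->; eexists. Qed.

Lemma chain_edge_star u c : edge u c \in P -> nth None w c = None.
Proof. by case/chain_edge_inv => i [j [_ wj _ /edge_dir_inj ->]]. Qed.

Lemma chain_edges_flip_once u v c : edge u c \in P -> edge v c \in P -> edge u c = edge v c.
Proof.
move=> /chain_edge_inv [i [j [_ _ rank_j e_ij]]] /chain_edge_inv [i' [j' [_ _ rank_j' e_ij']]].
move: (edge_dir_inj e_ij) (edge_dir_inj e_ij') => cj cj'; subst j j' i i'.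
by rewrite e_ij e_ij'.
Qed.

Lemma card_chain_edges : #|P| = nstars w.
Proof.
rewrite card_imset ?card_ord // => i i' /=.
have [j [_ rank_j ->]] := vert_succ_star (ltn_ord i).
have [j' [_ rank_j' ->]] := vert_succ_star (ltn_ord i').
by move/edge_dir_inj => eq_jj'; apply/val_inj; rewrite /= -rank_j -rank_j' eq_jj'.
Qed.

Lemma flip_edges_star (c : 'I_n) : nth None w c = None ->
  flip_edges w c = [set edge (x (star_rank w c)) c].
Proof.
move=> wc; apply/setP => e; rewrite !inE; apply/andP/eqP => [[eP] | ->].
  case/chain_edge_inv: eP => i [j [_ _ rank_j ->]]; rewrite edge_flipsE => /eqP jc.
  by rewrite -jc rank_j.
have lt_c : star_rank w c < nstars w by rewrite star_rank_lt_nstars ?size_w.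
by rewrite edge_flipsE eqxx -(vert_succ wc erefl) chain_edge_succ.
Qed.

End Chain.

Section Child.
Variables (n : nat) (w w' : seq (option bool)) (a b : 'I_n).
Hypotheses (size_w : size w = n) (lt_ab : a < b).
Hypotheses (wa : nth None w a = None) (wb : nth None w b = None).
Hypothesis w_between : forall j, a < j < b -> nth None w j != None.
Hypothesis w'E : w' = set_nth None (set_nth None w a (Some false)) b (Some true).
Local Notation k := (star_rank w a).
Local Notation x i := (vert n w i).
Local Notation y i := (vert n w' i).

Lemma size_child : size w' = n.
Proof. by rewrite w'E !size_set_nth size_w !(maxn_idPr _) ?ltn_ord. Qed.

Lemma nth_child (j : 'I_n) :
  nth None w' j = if j == b then Some true else if j == a then Some false else nth None w j.
Proof. by rewrite w'E nth_set_nth /= nth_set_nth. Qed.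

Lemma star_rank_between j : a < j <= b -> star_rank w j = k.+1.
Proof.
elim: j => // j IH; rewrite ltnS leq_eqVlt => /andP [/orP [/eqP <- _ | lt_aj le_jb]].
  by rewrite star_rankS ?size_w // wa addn1.
have lt_jb : j < b := le_jb.
rewrite star_rankS ?size_w ?(ltn_trans lt_jb) // IH ?lt_aj ?(ltnW lt_jb) //.
by rewrite (negbTE (w_between _)) ?lt_aj ?addn0.
Qed.

Lemma star_rank_b : star_rank w b = k.+1.
Proof. by rewrite star_rank_between ?lt_ab ?leqnn. Qed.

Lemma star_rank_child j : j <= n -> star_rank w' j + (a < j) + (b < j) = star_rank w j.
Proof.
elim: j => [|j IH] le_jn; first by rewrite /star_rank !take0.
rewrite star_rankS ?size_child // star_rankS ?size_w // -(IH (ltnW le_jn)).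
rewrite [in nth None w' j]w'E nth_set_nth /= nth_set_nth /=.
rewrite !ltnS (leq_eqVlt a) (leq_eqVlt b) ![_ == j]eq_sym.
have [-> | jb] := eqVneq j b.
  by rewrite ltnn wb (gtn_eqF lt_ab) lt_ab /=; lia.
have [-> | ja] := eqVneq j a.
  by rewrite ltnn wa ltnNge (ltnW lt_ab) /=; lia.
by rewrite /=; lia.
Qed.

Lemma nstars_child : nstars w' + 2 = nstars w.
Proof.
have := star_rank_child (leqnn n).
by rewrite /star_rank !take_oversize ?size_w ?size_child // !ltn_ord -addnA.
Qed.

Lemma star_rank_child_other (j : 'I_n) : nth None w j = None -> j != a -> j != b ->
  star_rank w' j = star_rank w j /\ star_rank w j < k \/
  star_rank w' j + 2 = star_rank w j /\ k.+2 <= star_rank w j.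
Proof.
move=> wj ja jb; have := star_rank_child (ltnW (ltn_ord j)).
have [lt_ja | lt_aj | /val_inj eq_ja] := ltngtP j a; last by rewrite eq_ja eqxx in ja.
  rewrite ltnNge (ltnW (ltn_trans lt_ja lt_ab)) !addn0 => ->.
  by left; split; last by apply: star_rank_lt; rewrite ?size_w.
have [lt_jb | lt_bj | /val_inj eq_jb] := ltngtP j b; last by rewrite eq_jb eqxx in jb.
  by move: (w_between (j := j)); rewrite lt_aj lt_jb wj => /(_ isT).
rewrite -addnA => eq_rank; right; split => //.
by rewrite -star_rank_b star_rank_lt ?size_w.
Qed.

Lemma child_vert_low i : i <= k -> y i = flip (x i) b.
Proof.
move=> le_ik; apply/ffunP => j; rewrite flipE !vertE nth_child.
have [-> | jb] := eqVneq j b; first by rewrite wb star_rank_b ltnNge (leqW le_ik).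
have [-> | ja] := eqVneq j a; first by rewrite wa ltnNge le_ik.
case wj: (nth None w j) => [c|] //.
by case: (star_rank_child_other wj ja jb) => [[-> //] | [<- le_kj]]; apply/idP/idP; lia.
Qed.

Lemma child_vert_high i : k <= i -> y i = flip (x i.+2) a.
Proof.
move=> le_ki; apply/ffunP => j; rewrite flipE !vertE nth_child.
have [-> | jb] := eqVneq j b.
  by rewrite wb star_rank_b (gtn_eqF lt_ab : (b == a) = false) !ltnS le_ki.
have [-> | ja] := eqVneq j a; first by rewrite wa ltnS leqW.
case wj: (nth None w j) => [c|] //.
by case: (star_rank_child_other wj ja jb) => [[-> lt_jk] | [<- le_kj]]; apply/idP/idP; lia.
Qed.

Lemma star_rank_a_lt_nstars : k.+2 <= nstars w.
Proof. by rewrite -star_rank_b star_rank_lt_nstars ?size_w. Qed.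

Lemma chain_vert_neq_child_vert i m : x i != y m.
Proof.
apply/eqP => /ffunP xy; move: (xy a) (xy b); rewrite !vertE !nth_child eqxx wa wb.
rewrite (ltn_eqF lt_ab : (a == b) = false) (gtn_eqF lt_ab : (b == a) = false) eqxx.
rewrite star_rank_b /= => lt_ki lt_k1i.
by rewrite (ltn_trans (ltnSn k) lt_k1i) in lt_ki.
Qed.

Local Notation P := (chain_edges n w).
Local Notation P' := (chain_edges n w').

Lemma chain_child_disjoint e e' : e \in P -> e' \in P' -> [disjoint e & e'].
Proof.
move=> eP e'P'; apply/pred0P => u /=; apply/andP => -[ue ue'].
have [i ui] := chain_edge_vert eP ue; have [m um] := chain_edge_vert e'P' ue'.
by move: (chain_vert_neq_child_vert i m); rewrite -ui -um eqxx.
Qed.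

Lemma child_vert_shift i : i < nstars w -> i != k -> i != k.+1 ->
  exists m (c : 'I_n), [/\ (c == a) || (c == b), m < nstars w',
                         y m = flip (x i) c & y m.+1 = flip (x i.+1) c].
Proof.
move=> lt_i ik ik1; have nst := nstars_child; have bound := star_rank_a_lt_nstars.
case: (ltnP i k) => [lt_ik | le_ki].
  exists i, b; rewrite eqxx orbT (child_vert_low (ltnW lt_ik)) (child_vert_low lt_ik).
  by split => //; lia.
have [m im] : exists m, i = m.+2 by exists i.-2; lia.
subst i; have le_km : k <= m by lia.
exists m, a; rewrite eqxx (child_vert_high le_km) (child_vert_high (leqW le_km)).
by split => //; lia.
Qed.

Local Notation F := (flipping_cycles P P').
Local Notation off_ab := (P :\: (flip_edges w a :|: flip_edges w b)).

Lemma flipping_cycle_setI_off_ab E :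
  E \in F -> exists2 e, e \in off_ab & E :&: P = [set e].
Proof.
case/(flipping_cycle_square chain_child_disjoint) => p [d [c [_ _ EP EP']]].
exists (edge (flip p c) d) => //.
have /setIP [_ eP] : edge (flip p c) d \in E :&: P by rewrite EP set11.
have /setIP [_ e'P'] : edge p d \in E :&: P' by rewrite EP' set11.
have := chain_edge_star size_child e'P'; rewrite nth_child.
have [// | db] := eqVneq d b; have [// | da _] := eqVneq d a.
by rewrite in_setD in_setU !inE eP !edge_flipsE (negbTE da) (negbTE db).
Qed.

Lemma flipping_cycle_of_edge_off_ab e :
  e \in off_ab -> exists2 E, E \in F & E :&: P = [set e].
Proof.
rewrite in_setD in_setU negb_or => /andP [/andP [nfa nfb] eP].
have [i [j [lt_i wj rank_j e_ij]]] := chain_edge_inv size_w eP.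
move: nfa nfb; rewrite !inE eP e_ij !edge_flipsE /= => ja jb.
have ik : i != k by rewrite -rank_j star_rank_neq.
have ik1 : i != k.+1 by rewrite -rank_j -star_rank_b star_rank_neq.
have [m [c [cab lt_m ym ym1]]] := child_vert_shift lt_i ik ik1.
have cj : c != j by case/orP: cab => /eqP ->; rewrite eq_sym.
have e'P' : edge (y m) j \in P'.
  by have := chain_edge_succ n lt_m; rewrite ym1 (vert_succ size_w wj rank_j) flipC -ym.
have eP' : edge (flip (y m) c) j \in P by rewrite ym flipK -e_ij.
have [sqF sqP] := square_flipping_cycle chain_child_disjoint cj eP' e'P'.
by exists (square (y m) j c); rewrite // sqP ym flipK -e_ij.
Qed.

Lemma card_edges_off_ab : #|off_ab| = nstars w - 2.
Proof.
have sub c : flip_edges w c \subset P by apply/subsetP => e; rewrite inE => /andP [].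
rewrite cardsD (setIidPr _) ?subUset ?sub // (card_chain_edges size_w).
rewrite !flip_edges_star // cards2.
suff -> : edge (x k) a != edge (x (star_rank w b)) b by [].
by apply: contraTneq lt_ab => /edge_dir_inj ->; rewrite ltnn.
Qed.

Lemma card_flipping_cycles : #|F| = nstars w - 2.
Proof.
have inj := flipping_cycle_setI_inj chain_child_disjoint (chain_edges_flip_once size_child).
rewrite -card_edges_off_ab -(card_in_imset inj) -[#|off_ab|](card_imset _ set1_inj).
suff -> : [set E :&: P | E in F] = [set [set e] | e in off_ab] by [].
apply/setP => S; apply/imsetP/imsetP => [[E] | [e e_off ->]].
  by case/flipping_cycle_setI_off_ab => e e_off -> ->; exists e.
by have [E EF EPe] := flipping_cycle_of_edge_off_ab e_off; exists E.
Qed.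

Lemma bigcup_flipping_cycles : \bigcup_(E in F) (E :&: P) = off_ab.
Proof.
apply/setP => e; apply/bigcupP/idP => [[E] | e_off].
  by case/flipping_cycle_setI_off_ab => e' e'_off -> /set1P ->.
by have [E EF EPe] := flipping_cycle_of_edge_off_ab e_off; exists E; rewrite // EPe set11.
Qed.

End Child.

Theorem lemma12 (n h : nat) (w w' : seq (option bool)) (a b : 'I_n) :
  gk_chain n h w -> child_at w w' a b ->
  let F := flipping_cycles (chain_edges n w) (chain_edges n w') in
  [/\ #|F| = h - 2,
      {in F &, forall E1 E2, E1 != E2 ->
         [disjoint E1 :&: chain_edges n w & E2 :&: chain_edges n w]},
      {in F &, forall E1 E2, E1 != E2 ->
         [disjoint E1 :&: chain_edges n w' & E2 :&: chain_edges n w']} &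
      \bigcup_(E in F) (E :&: chain_edges n w) =
        chain_edges n w :\: (flip_edges w a :|: flip_edges w b)].
Proof.
move=> [size_w [us [size_us _ wE]]] [/andP [lt_ab lt_bw] wa wb w_between w'E] F.
have nthE j : j < size w -> nth (Some false) w j = nth None w j by apply: set_nth_default.
have lt_aw := ltn_trans lt_ab lt_bw.
rewrite nthE // in wa; rewrite nthE // in wb.
have {}w_between j : a < j < b -> nth None w j != None.
  by move=> /[dup] /andP [_ lt_jb] /w_between; rewrite nthE // (ltn_trans lt_jb).
have disj := chain_child_disjoint size_w lt_ab wa wb w_between w'E.
have size_w' := size_child size_w w'E.
split.
- by rewrite (card_flipping_cycles size_w lt_ab wa wb w_between w'E) wE nstars_gk_word size_us.
- exact: flipping_cycles_disjointl disj (chain_edges_flip_once size_w').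
- exact: flipping_cycles_disjointr disj (chain_edges_flip_once size_w).
- exact: (bigcup_flipping_cycles size_w lt_ab wa wb w_between w'E).
Qed.
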